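(* Let $k\le n$ be positive integers, $m=\binom nk$, let $\mu$ be an absolute operator norm on $\mathbb{C}^{m\times m}$, and let $p$ and $r$ be positive integers. Then $$\theta_k(\mu,\ell_p)\le n^{\left[\frac{k}{r}-\frac{k}{p}\right]^+}\theta_k(\mu,\ell_r),$$ where $[x]^+=\max\{x,0\}$.
   Context: $C_k(B)$ is the $k$th compound of $B\in\mathbb{C}^{n\times n}$ (the $\binom nk\times\binom nk$ matrix of $k\times k$ minors). For a vector norm $\nu$ on $\mathbb{C}^n$ and a norm $\mu$ on $\mathbb{C}^{m\times m}$, $\theta_k(\mu,\nu)=\max\{\mu(C_k(B)): B\in\mathbb{C}^{n\times n},\ \nu(\mathrm{col}_i(B))=1,\ i=1,\ldots,n\}$, where $\mathrm{col}_i(B)$ is the $i$th column. $\ell_p$ denotes the vector $p$-norm. An absolute operator norm is a matrix norm induced by an absolute vector norm. *)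

From HB Require Import structures.
From mathcomp Require Import all_boot all_order all_algebra.
From mathcomp Require Import all_classical all_reals.
From mathcomp Require Import exp.
From mathcomp Require Import complex.

Set Implicit Arguments.
Unset Strict Implicit.
Unset Printing Implicit Defensive.

Import Order.TTheory GRing.Theory Num.Theory.
Local Open Scope ring_scope.
Local Open Scope classical_set_scope.

Section Defs.
Variable R : realType.
Local Notation C := R[i].

Definition cabs (z : C) : R := Num.sqrt (complex.Re z ^+ 2 + complex.Im z ^+ 2).

Definition ksets (n k : nat) : {set {set 'I_n}} := [set S : {set 'I_n} | #|S| == k].

Lemma card_ksets (n k : nat) : #|ksets n k| = 'C(n, k).
Proof. by rewrite /ksets card_draws card_ord. Qed.

Definition kset_of (n k : nat) (I : 'I_('C(n, k))) : {set 'I_n} :=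
  enum_val (cast_ord (esym (card_ksets n k)) I).

(* entry (i,j) of the submatrix of B with rows S and columns T
   (elements of S, T listed in increasing order) *)
Definition subentry (n : nat) (B : 'M[C]_n) (S T : {set 'I_n}) (i j : nat) : C :=
  match onth (enum S) i, onth (enum T) j with
  | Some a, Some b => B a b
  | _, _ => 0
  end.

Definition compound (n k : nat) (B : 'M[C]_n) : 'M[C]_('C(n, k)) :=
  \matrix_(I < 'C(n, k), J < 'C(n, k)) \det (\matrix_(i < k, j < k)
      subentry B (kset_of I) (kset_of J) i j).

Definition is_vnorm (n : nat) (nu : 'cV[C]_n -> R) : Prop :=
  [/\ forall x : 'cV[C]_n, 0 <= nu x,
      forall x : 'cV[C]_n, nu x = 0 -> x = 0,
      forall (a : C) (x : 'cV[C]_n), nu (a *: x) = cabs a * nu x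
    & forall x y : 'cV[C]_n, nu (x + y) <= nu x + nu y].

Definition absolute (n : nat) (nu : 'cV[C]_n -> R) : Prop :=
  forall x y : 'cV[C]_n, (forall i : 'I_n, cabs (x i 0) = cabs (y i 0)) -> nu x = nu y.

Definition opnorm (n : nat) (nu : 'cV[C]_n -> R) (A : 'M[C]_n) : R :=
  sup [set nu (A *m x) | x in [set x : 'cV[C]_n | nu x = 1]].

Definition abs_opnorm (m : nat) (mu : 'M[C]_m -> R) : Prop :=
  exists nu : 'cV[C]_m -> R,
    [/\ is_vnorm nu, absolute nu & forall A, mu A = opnorm nu A].

Definition lp (n p : nat) (x : 'cV[C]_n) : R :=
  powR (\sum_(i < n) cabs (x i 0) ^+ p) (p%:R^-1).

Definition theta (n k : nat) (mu : 'M[C]_('C(n, k)) -> R) (nu : 'cV[C]_n -> R) : R :=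
  sup [set mu (compound k B) | B in [set B : 'M[C]_n | forall i : 'I_n, nu (col i B) = 1]].

End Defs.

From HB Require Import structures.
From mathcomp Require Import all_boot all_order all_algebra.
From mathcomp Require Import all_classical all_reals.
From mathcomp Require Import exp.
From mathcomp Require Import complex.
From mathcomp Require Import perm.
From mathcomp Require Import ring lra.

(* If every column of B has unit l_p norm, write B = B' D with D the diagonal
   matrix of the l_r norms of the columns, so that every column of B' has unit
   l_r norm.  Then C_k(B) = C_k(B') C_k(D), where C_k(D) is diagonal with
   entries the products over k-subsets J of the entries of D.  A vector of unit
   l_p norm has l_r norm at most n^[1/r - 1/p]^+ (trivially if p <= r, by
   Young's inequality otherwise), so these entries are at most
   n^[k/r - k/p]^+.  Finally an absolute norm is monotone in the moduli of the
   coordinates, whence mu(A diag(g)) <= max_J |g_J| mu(A) for the induced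
   operator norm mu. *)

Set Implicit Arguments.
Unset Strict Implicit.
Unset Printing Implicit Defensive.
Import Order.TTheory GRing.Theory Num.Theory.
Local Open Scope ring_scope.
Local Open Scope complex_scope.

Lemma ler_sum_term (R : numDomainType) (I : finType) (F : I -> R) (i : I) :
  (forall j, 0 <= F j) -> F i <= \sum_j F j.
Proof. by move=> F_ge0; rewrite (bigD1 i) //= lerDl sumr_ge0. Qed.

Section ComplexModulus.
Variable R : realType.
Implicit Types (z w : R[i]) (x : R).

Lemma cabsE z : (cabs z)%:C = `|z|.
Proof. by case: z. Qed.

Lemma cabs_ge0 z : 0 <= cabs z.
Proof. exact: sqrtr_ge0. Qed.

Lemma cabs0 : cabs 0 = 0 :> R.
Proof. by apply: complexI; rewrite cabsE normr0. Qed.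

Lemma cabs1 : cabs 1 = 1 :> R.
Proof. by apply: complexI; rewrite cabsE normr1. Qed.

Lemma cabs0_eq0 z : cabs z = 0 -> z = 0.
Proof. by move=> z0; apply/normr0_eq0; rewrite -cabsE z0. Qed.

Lemma cabsN z : cabs (- z) = cabs z.
Proof. by apply: complexI; rewrite !cabsE normrN. Qed.

Lemma cabsM z w : cabs (z * w) = cabs z * cabs w.
Proof. by apply: complexI; rewrite rmorphM /= !cabsE normrM. Qed.

Lemma cabsX z m : cabs (z ^+ m) = cabs z ^+ m.
Proof. by apply: complexI; rewrite rmorphXn /= !cabsE normrX. Qed.

Lemma cabsD z w : cabs (z + w) <= cabs z + cabs w.
Proof. by rewrite -lecR rmorphD /= !cabsE ler_normD. Qed.

Lemma cabs_real x : 0 <= x -> cabs x%:C = x.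
Proof. by move=> x0; apply: complexI; rewrite cabsE ger0_norm ?ler0c. Qed.

Lemma cabs_sum (I : finType) (F : I -> R[i]) :
  cabs (\sum_i F i) <= \sum_i cabs (F i).
Proof.
apply: (big_ind2 (fun z y => cabs z <= y)); first by rewrite cabs0.
  by move=> z1 s1 z2 s2 h1 h2; apply: le_trans (cabsD z1 z2) (lerD h1 h2).
by [].
Qed.

Lemma cabs_prod (I : finType) (P : pred I) (F : I -> R[i]) :
  cabs (\prod_(i | P i) F i) = \prod_(i | P i) cabs (F i).
Proof. exact: (big_morph _ cabsM cabs1). Qed.

Lemma cabs_prod_le (I : finType) (A : {pred I}) (F : I -> R[i]) (s : R) :
  (forall i, cabs (F i) <= s) -> cabs (\prod_(i in A) F i) <= s ^+ #|A|.
Proof.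
by move=> Fs; rewrite cabs_prod -prodr_const; apply: ler_prod => i _; rewrite cabs_ge0 Fs.
Qed.

End ComplexModulus.

Section VectorNorm.
Variables (R : realType) (d : nat) (nu : 'cV[R[i]]_d -> R).
Hypothesis nu_norm : is_vnorm nu.
Implicit Types x y : 'cV[R[i]]_d.

Lemma vnorm_ge0 x : 0 <= nu x.
Proof. by case: nu_norm => + _ _ _; apply. Qed.

Lemma vnorm0_eq0 x : nu x = 0 -> x = 0.
Proof. by case: nu_norm => _ + _ _; apply. Qed.

Lemma vnormZ a x : nu (a *: x) = cabs a * nu x.
Proof. by case: nu_norm => _ _ + _; apply. Qed.

Lemma vnormD x y : nu (x + y) <= nu x + nu y.
Proof. by case: nu_norm => _ _ _; apply. Qed.

Lemma vnorm0 : nu 0 = 0.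
Proof. by rewrite -(scale0r 0) vnormZ cabs0 mul0r. Qed.

Lemma vnormZ_real (c : R) x : 0 <= c -> nu (c%:C *: x) = c * nu x.
Proof. by move=> c0; rewrite vnormZ cabs_real. Qed.

Lemma vnorm_sum (I : finType) (F : I -> 'cV[R[i]]_d) :
  nu (\sum_i F i) <= \sum_i nu (F i).
Proof.
apply: (big_ind2 (fun v s => nu v <= s)); first by rewrite vnorm0.
  by move=> x1 s1 x2 s2 h1 h2; apply: le_trans (vnormD x1 x2) (lerD h1 h2).
by [].
Qed.

Lemma vnorm_delta_gt0 (i : 'I_d) : 0 < nu (delta_mx i 0).
Proof.
rewrite lt_def vnorm_ge0 andbT; apply/eqP => /vnorm0_eq0 /matrixP /(_ i 0).
by rewrite !mxE !eqxx => /eqP; rewrite oner_eq0.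
Qed.

Lemma vnorm_le_l1 x :
  nu x <= (\sum_i nu (delta_mx i 0)) * \sum_i cabs (x i 0).
Proof.
have x_sum : x = \sum_i x i 0 *: delta_mx i 0.
  by rewrite {1}(matrix_sum_delta x); apply: eq_bigr => i _; rewrite big_ord1.
rewrite {1}x_sum; apply: le_trans (vnorm_sum _) _.
rewrite mulr_sumr; apply: ler_sum => i _.
by rewrite vnormZ mulrC ler_wpM2r ?cabs_ge0 ?ler_sum_term // => j; apply: vnorm_ge0.
Qed.

Lemma vnorm_normalize x : nu x != 0 -> exists2 y, nu y = 1 & x = (nu x)%:C *: y.
Proof.
move=> x0; have nx_gt0 : 0 < nu x by rewrite lt_def x0 vnorm_ge0.
exists ((nu x)^-1%:C *: x); first by rewrite vnormZ_real ?invr_ge0 ?mulVf ?ltW.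
by rewrite scalerA -rmorphM /= divff // scale1r.
Qed.

Lemma exists_vnorm_eq1 : (0 < d)%N -> exists x, nu x = 1.
Proof.
move=> d_gt0; have e_gt0 := vnorm_delta_gt0 (Ordinal d_gt0).
by have [y y1 _] := vnorm_normalize (lt0r_neq0 e_gt0); exists y.
Qed.

End VectorNorm.

Section AbsoluteNorm.
Variables (R : realType) (d : nat) (nu : 'cV[R[i]]_d -> R).
Hypotheses (nu_norm : is_vnorm nu) (nu_abs : absolute nu).
Implicit Types x y : 'cV[R[i]]_d.

(* x has the same moduli as the convex combination (1+t)/2 y + (1-t)/2 y',
   where y' is y with its j-th entry negated and t = |x_j| / |y_j|. *)
Lemma absolute_le_at (j : 'I_d) x y :
  (forall i, i != j -> x i 0 = y i 0) -> cabs (x j 0) <= cabs (y j 0) ->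
  nu x <= nu y.
Proof.
move=> xy_off xy_j.
have [yj0|yj0] := eqVneq (y j 0) 0.
  suff -> : x = y by [].
  apply/matrixP => i l; rewrite (ord1 l); have [->|] := eqVneq i j; last exact: xy_off.
  move: xy_j; rewrite yj0 cabs0 => xj_le0; apply: cabs0_eq0.
  by apply/le_anti; rewrite xj_le0 cabs_ge0.
have yj_gt0 : 0 < cabs (y j 0).
  by rewrite lt_def cabs_ge0 andbT; apply: contra_neq yj0 => /cabs0_eq0.
set t := cabs (x j 0) / cabs (y j 0).
have t_ge0 : 0 <= t by rewrite divr_ge0 ?cabs_ge0 ?ltW.
have t_le1 : t <= 1 by rewrite ler_pdivrMr // mul1r.
pose y' : 'cV_d := \col_i (if i == j then - y i 0 else y i 0).
have ny' : nu y' = nu y.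
  by apply: nu_abs => i; rewrite mxE; case: eqP => // _; apply: cabsN.
have -> : nu x = nu (((1 + t) / 2)%:C *: y + ((1 - t) / 2)%:C *: y').
  apply: nu_abs => i; rewrite !mxE; have [->|ij] := eqVneq i j.
    rewrite mulrN -mulNr -mulrDl -rmorphN -rmorphD cabsM cabs_real; last lra.
    have -> : (1 + t) / 2 + - ((1 - t) / 2) = t :> R by field.
    by rewrite /t divfK // gt_eqF.
  rewrite -mulrDl -rmorphD xy_off //.
  have -> : (1 + t) / 2 + (1 - t) / 2 = 1 :> R by field.
  by rewrite mul1r.
apply: le_trans (vnormD nu_norm _ _) _.
rewrite !(vnormZ_real nu_norm) ?ny'; lra.
Qed.

Lemma absolute_mono x y :
  (forall i, cabs (x i 0) <= cabs (y i 0)) -> nu x <= nu y.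
Proof.
move=> xy; pose w l : 'cV_d := \col_i (if (i < l)%N then x i 0 else y i 0).
have w0 : w 0%N = y by apply/matrixP => i l; rewrite (ord1 l) mxE.
have -> : x = w d by apply/matrixP => i l; rewrite (ord1 l) mxE ltn_ord.
elim: {-2}d (leqnn d) => [|l IHl] ld; first by rewrite w0.
apply: le_trans (IHl (ltnW ld)); apply: (@absolute_le_at (Ordinal ld)).
  move=> i ij; rewrite !mxE ltnS leq_eqVlt.
  by have /negbTE -> : (i != l :> nat) by apply: contra_neq ij => il; apply: val_inj.
by rewrite !mxE /= ltnn ltnSn.
Qed.

Lemma l1_le_vnorm x :
  \sum_i cabs (x i 0) <= nu x * \sum_i (nu (delta_mx i 0))^-1.
Proof.
rewrite mulr_sumr; apply: ler_sum => i _.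
rewrite ler_pdivlMr ?vnorm_delta_gt0 // -vnormZ //; apply: absolute_mono => l.
rewrite !mxE; case: eqP => [->|_]; first by rewrite andbT mulr1.
by rewrite mulr0 cabs0 cabs_ge0.
Qed.

Lemma vnorm_mulmx_le : exists K : R, forall (A : 'M[R[i]]_d) (a : R) x,
  0 <= a -> (forall i j, cabs (A i j) <= a) -> nu (A *m x) <= K * a * nu x.
Proof.
set M1 := \sum_i nu (delta_mx i 0); set M2 := \sum_i (nu (delta_mx i 0))^-1.
have M1_ge0 : 0 <= M1 by rewrite sumr_ge0 // => i _; apply: vnorm_ge0.
exists (M1 * d%:R * M2) => A a x a_ge0 Aa.
apply: le_trans (vnorm_le_l1 nu_norm _) _; rewrite -!mulrA ler_wpM2l //.
have Ax_l1 : \sum_i cabs ((A *m x) i 0) <= \sum_(i < d) a * \sum_j cabs (x j 0).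
  apply: ler_sum => i _; rewrite mxE; apply: le_trans (cabs_sum _) _.
  by rewrite mulr_sumr; apply: ler_sum => j _; rewrite cabsM ler_wpM2r ?cabs_ge0.
apply: le_trans Ax_l1 _; rewrite sumr_const card_ord -[leLHS]mulr_natl.
rewrite ler_wpM2l // [M2 * _]mulrC -mulrA ler_wpM2l //.
exact: l1_le_vnorm.
Qed.

Lemma opnorm_has_ubound (A : 'M[R[i]]_d) :
  has_ubound [set nu (A *m x) | x in [set x | nu x = 1]]%classic.
Proof.
have [K hK] := vnorm_mulmx_le; set a := \sum_i \sum_j cabs (A i j).
have row_ge0 i : 0 <= \sum_j cabs (A i j) by apply: sumr_ge0 => j _; apply: cabs_ge0.
exists (K * a) => _ [x /= x1 <-]; rewrite -[K * a]mulr1 -x1.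
apply: hK => [|i j]; first by apply: sumr_ge0.
exact: le_trans (ler_sum_term j (fun j => cabs_ge0 (A i j))) (ler_sum_term i row_ge0).
Qed.

Lemma opnorm_ge (A : 'M[R[i]]_d) x : nu x = 1 -> nu (A *m x) <= opnorm nu A.
Proof. by move=> x1; apply: (ub_le_sup (opnorm_has_ubound A)); exists x. Qed.

Lemma opnorm_le (A : 'M[R[i]]_d) (b : R) : (0 < d)%N ->
  (forall x, nu x = 1 -> nu (A *m x) <= b) -> opnorm nu A <= b.
Proof.
move=> d_gt0 Ab; have [x x1] := exists_vnorm_eq1 nu_norm d_gt0.
by apply: ge_sup => [|_ [y y1 <-]]; [exists (nu (A *m x)), x | apply: Ab].
Qed.

Lemma opnorm_ge0 (A : 'M[R[i]]_d) : (0 < d)%N -> 0 <= opnorm nu A.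
Proof.
move=> d_gt0; have [x x1] := exists_vnorm_eq1 nu_norm d_gt0.
exact: le_trans (vnorm_ge0 _ _) (opnorm_ge A x1).
Qed.

Lemma vnorm_mulmx_opnorm (A : 'M[R[i]]_d) x : nu (A *m x) <= opnorm nu A * nu x.
Proof.
have [x0|/(vnorm_normalize nu_norm)[y y1 ->]] := eqVneq (nu x) 0.
  by rewrite (vnorm0_eq0 nu_norm x0) mulmx0 vnorm0 // mulr0.
rewrite -scalemxAr !vnormZ_real ?vnorm_ge0 // y1 mulr1 mulrC.
by rewrite ler_wpM2r ?vnorm_ge0 ?opnorm_ge.
Qed.

Lemma opnorm_mul_diag (A : 'M[R[i]]_d) (g : 'rV[R[i]]_d) (G : R) : (0 < d)%N ->
  (forall i, cabs (g 0 i) <= G) -> opnorm nu (A *m diag_mx g) <= G * opnorm nu A.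
Proof.
move=> d_gt0 gG; have G_ge0 := le_trans (cabs_ge0 _) (gG (Ordinal d_gt0)).
apply: opnorm_le => // x x1; rewrite -mulmxA mulrC.
apply: le_trans (vnorm_mulmx_opnorm _ _) (ler_wpM2l (opnorm_ge0 _ d_gt0) _).
rewrite -[G]mulr1 -x1 -vnormZ_real //; apply: absolute_mono => i.
by rewrite mul_diag_mx !mxE !cabsM cabs_real // ler_wpM2r ?cabs_ge0.
Qed.

End AbsoluteNorm.

Lemma col_mul_diag (R : comPzRingType) m n (B : 'M[R]_(m, n)) (v : 'rV[R]_n) b :
  col b (B *m diag_mx v) = v 0 b *: col b B.
Proof. by rewrite mul_mx_diag; apply/matrixP => a l; rewrite !mxE mulrC. Qed.

Section PowR.
Variable R : realType.

Lemma powRVnK (a : R) (q : nat) : 0 <= a -> (0 < q)%N -> (a `^ q%:R^-1) `^ q%:R = a.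
Proof. by move=> a0 q0; rewrite -powRrM mulVf ?powRr1 // pnatr_eq0 -lt0n. Qed.

Lemma exprn_powRVn (a : R) (q : nat) : 0 <= a -> (0 < q)%N -> (a ^+ q) `^ q%:R^-1 = a.
Proof.
by move=> a0 q0; rewrite -powR_mulrn // -powRrM mulfV ?powRr1 // pnatr_eq0 -lt0n.
Qed.

Lemma powR_ge1 (a e : R) : 1 <= a -> 0 <= e -> 1 <= a `^ e.
Proof. by move=> a1 e0; rewrite -(powRr0 a) ler_powR. Qed.

End PowR.

Section LpNorm.
Variables (R : realType) (n : nat).
Implicit Types (x : 'cV[R[i]]_n) (p r : nat).

Lemma lp_ge0 p x : 0 <= lp p x.
Proof. exact: powR_ge0. Qed.

Lemma sum_cabsX_ge0 p x : 0 <= \sum_i cabs (x i 0) ^+ p.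
Proof. by apply: sumr_ge0 => i _; rewrite exprn_ge0 ?cabs_ge0. Qed.

Lemma lpZ p x (c : R) : (0 < p)%N -> 0 <= c -> lp p (c%:C *: x) = c * lp p x.
Proof.
move=> p_gt0 c_ge0; rewrite /lp.
have -> : \sum_i cabs ((c%:C *: x) i 0) ^+ p = c ^+ p * \sum_i cabs (x i 0) ^+ p.
  by rewrite mulr_sumr; apply: eq_bigr => i _; rewrite mxE cabsM cabs_real // exprMn.
by rewrite powRM ?exprn_ge0 ?sum_cabsX_ge0 // exprn_powRVn.
Qed.

Lemma lp0 p : (0 < p)%N -> lp p (0 : 'cV[R[i]]_n) = 0.
Proof.
move=> p_gt0; rewrite /lp big1 ?powR0 // => [|i _].
  by rewrite invr_eq0 pnatr_eq0 -lt0n.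
by rewrite mxE cabs0 expr0n gtn_eqF.
Qed.

Lemma cabs_le_lp p x (i : 'I_n) : (0 < p)%N -> cabs (x i 0) <= lp p x.
Proof.
move=> p_gt0; rewrite /lp -{1}(@exprn_powRVn _ (cabs (x i 0)) p) ?cabs_ge0 //.
apply: ge0_ler_powR;
  rewrite ?invr_ge0 ?ler0n ?nnegrE ?exprn_ge0 ?cabs_ge0 ?sum_cabsX_ge0 //.
by apply: ler_sum_term => j; rewrite exprn_ge0 ?cabs_ge0.
Qed.

Lemma lp_gt0 r x : (0 < r)%N -> x != 0 -> 0 < lp r x.
Proof.
move=> r_gt0 x_neq0; have [i xi_neq0] : exists i, x i 0 != 0.
  apply/existsP; apply: contraNT x_neq0 => /existsPn x0.
  by apply/eqP/matrixP => i j; rewrite (ord1 j) mxE; apply/eqP/negPn/x0.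
apply: lt_le_trans (cabs_le_lp x i r_gt0).
by rewrite lt_def cabs_ge0 andbT; apply: contra_neq xi_neq0 => /cabs0_eq0.
Qed.

Lemma lp_eq1_sum p x : (0 < p)%N -> lp p x = 1 -> \sum_i cabs (x i 0) ^+ p = 1.
Proof.
by move=> p_gt0 x1; rewrite -(powRVnK (sum_cabsX_ge0 p x) p_gt0) -/(lp p x) x1 powR1.
Qed.

Lemma lp_le1 p r x : (0 < p)%N -> (p <= r)%N -> lp p x = 1 -> lp r x <= 1.
Proof.
move=> p_gt0 pr x1; have r_gt0 := leq_trans p_gt0 pr.
have sum_le1 : \sum_i cabs (x i 0) ^+ r <= 1.
  rewrite -(lp_eq1_sum p_gt0 x1); apply: ler_sum => i _.
  by rewrite ler_wiXn2l ?cabs_ge0 // -x1 cabs_le_lp.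
have := ge0_ler_powR _ _ _ sum_le1; rewrite powR1; apply.
- by rewrite invr_ge0 ler0n.
- by rewrite nnegrE sum_cabsX_ge0.
- by rewrite nnegrE.
Qed.

(* Young's inequality a^r c <= (a^r)^P / P + c^Q / Q with P = p/r, Q = p/(p-r)
   and c = n^(-(p-r)/p), summed over the n entries of x. *)
Lemma lp_le_powR p r x : (0 < n)%N -> (0 < r)%N -> (r < p)%N -> lp p x = 1 ->
  lp r x <= (n%:R : R) `^ (r%:R^-1 - p%:R^-1).
Proof.
move=> n_gt0 r_gt0 rp x1; have p_gt0 := ltn_trans r_gt0 rp.
set N : R := n%:R; set pp : R := p%:R; set rr : R := r%:R.
have N_gt0 : 0 < N by rewrite ltr0n.
have rr_gt0 : 0 < rr by rewrite ltr0n.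
have pp_gt0 : 0 < pp by rewrite ltr0n.
have rpp : 0 < pp - rr by rewrite subr_gt0 ltr_nat.
set e : R := (pp - rr) / pp; set c : R := N `^ (- e).
set P : R := pp / rr; set Q : R := pp / (pp - rr).
have c_gt0 : 0 < c by rewrite powR_gt0.
have PQ : P^-1 + Q^-1 = 1 by rewrite !invf_div; field; rewrite gt_eqF.
have Young i : cabs (x i 0) ^+ r * c <= cabs (x i 0) ^+ p / P + N^-1 / Q.
  have a_ge0 := cabs_ge0 (x i 0).
  apply: le_trans (conjugate_powR (exprn_ge0 r a_ge0) (ltW c_gt0) _ _ PQ) _;
    rewrite ?divr_gt0 //.
  have rP : rr * P = pp by rewrite /P mulrC divfK ?gt_eqF.
  rewrite -(powR_mulrn r a_ge0) -!powRrM rP powR_mulrn //.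
  have -> : - e * Q = -1 by rewrite /e /Q; field; rewrite !gt_eqF.
  by rewrite powR_inv1 // ltW.
have sum_le : (\sum_i cabs (x i 0) ^+ r) * c <= 1.
  rewrite mulr_suml; apply: le_trans (ler_sum _ (fun i _ => Young i)) _.
  rewrite big_split /= -mulr_suml lp_eq1_sum // sumr_const card_ord -mulr_natl.
  rewrite mulrA mulfV ?gt_eqF // mul1r mul1r /P /Q !invf_div.
  by rewrite -mulrDl addrCA subrr addr0 divff ?gt_eqF.
have sum_le_Ne : \sum_i cabs (x i 0) ^+ r <= N `^ e.
  have Ne_gt0 : 0 < N `^ e by rewrite powR_gt0.
  by rewrite -(ler_pM2r c_gt0) {2}/c powRN mulfV ?gt_eqF.
rewrite /lp; apply: le_trans (ge0_ler_powR _ _ _ sum_le_Ne) _.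
- by rewrite invr_ge0 ler0n.
- by rewrite nnegrE sum_cabsX_ge0.
- by rewrite nnegrE powR_ge0.
rewrite -powRrM (_ : e * r%:R^-1 = rr^-1 - pp^-1) //.
by rewrite /e; field; rewrite !gt_eqF.
Qed.

Lemma lp_le_max p r x : (0 < n)%N -> (0 < p)%N -> (0 < r)%N -> lp p x = 1 ->
  lp r x <= (n%:R : R) `^ Num.max (r%:R^-1 - p%:R^-1) 0.
Proof.
move=> n_gt0 p_gt0 r_gt0 x1; have n_ge1 : 1 <= (n%:R : R) by rewrite ler1n.
have [pr|rp] := leqP p r.
  apply: le_trans (lp_le1 p_gt0 pr x1) (powR_ge1 _ _) => //.
  by rewrite le_max lexx orbT.
apply: le_trans (lp_le_powR n_gt0 r_gt0 rp x1) _.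
by apply: ler_powR; rewrite // le_max lexx.
Qed.

Lemma lp_col_id p (i : 'I_n) : (0 < p)%N -> lp p (col i (1%:M : 'M[R[i]]_n)) = 1.
Proof.
move=> p_gt0; rewrite /lp (bigD1 i) //= big1 ?addr0 => [|j ji].
  by rewrite !mxE eqxx cabs1 expr1n powR1.
by rewrite !mxE (negbTE ji) cabs0 expr0n gtn_eqF.
Qed.

Lemma lp_normalize_cols r c (B : 'M[R[i]]_(n, c)) :
  (0 < r)%N -> (forall b, col b B != 0) ->
  exists2 B', (forall b, lp r (col b B') = 1) &
              B = B' *m diag_mx (\row_b (lp r (col b B))%:C).
Proof.
move=> r_gt0 B_neq0; have e_gt0 b := lp_gt0 r_gt0 (B_neq0 b).
exists (B *m diag_mx (\row_b ((lp r (col b B))^-1)%:C)) => [b|].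
  by rewrite col_mul_diag mxE lpZ ?invr_ge0 ?ltW ?mulVf ?gt_eqF.
apply/matrixP => a b; rewrite !mul_mx_diag !mxE -mulrA -rmorphM /=.
by rewrite mulVf ?gt_eqF ?mulr1.
Qed.

End LpNorm.

Lemma big_onth (R : Type) (idx : R) (op : Monoid.law idx) (T : Type) (s : seq T)
    (F : T -> R) :
  \big[op/idx]_(x <- s) F x = \big[op/idx]_(j < size s) oapp F idx (onth s j).
Proof.
by elim: s => [|x s IHs]; rewrite ?big_nil ?big_ord0 // big_cons big_ord_recl IHs.
Qed.

Section Compound.
Variables (R : realType) (n k : nat).
Implicit Types (B : 'M[R[i]]_n) (v : 'rV[R[i]]_n).

Lemma card_kset_of (I : 'I_('C(n, k))) : #|kset_of I| = k.
Proof.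
by have := enum_valP (cast_ord (esym (card_ksets n k)) I); rewrite inE => /eqP.
Qed.

Lemma subentry_mul_diag B v (S T : {set 'I_n}) i j :
  subentry (B *m diag_mx v) S T i j =
  subentry B S T i j * oapp (v 0) 1 (onth (enum T) j).
Proof.
rewrite /subentry mul_mx_diag.
by case: onth => [a|]; case: onth => [b|]; rewrite ?mxE ?mul0r.
Qed.

Lemma compound_mul_diag B v :
  compound k (B *m diag_mx v) =
  compound k B *m diag_mx (\row_J \prod_(b in kset_of J) v 0 b).
Proof.
rewrite [compound k B *m _]mul_mx_diag; apply/matrixP => I J; rewrite !mxE.
set T := kset_of J; set M := \matrix_(i, j) subentry B (kset_of I) T i j.
have -> : \matrix_(i < k, j < k) subentry (B *m diag_mx v) (kset_of I) T i j =
          M *m diag_mx (\row_(j < k) oapp (v 0) 1 (onth (enum T) j)).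
  by rewrite [M *m _]mul_mx_diag; apply/matrixP => i j; rewrite !mxE subentry_mul_diag.
rewrite det_mulmx det_diag; congr (_ * _).
rewrite -[in RHS]big_enum [in RHS]big_onth -cardE card_kset_of.
by apply: eq_bigr => j _; rewrite mxE.
Qed.

Lemma cabs_det_le (M : 'M[R[i]]_k) :
  (forall i j, cabs (M i j) <= 1) -> cabs (\det M) <= k`!%:R.
Proof.
move=> M1; apply: le_trans (cabs_sum _) _.
rewrite -card_Sn -sum1_card natr_sum; apply: ler_sum => s _.
rewrite cabsM cabsX cabsN cabs1 expr1n mul1r cabs_prod.
by apply: prodr_ile1 => i _; rewrite cabs_ge0 M1.
Qed.

Lemma cabs_compound_le B I J :
  (forall a b, cabs (B a b) <= 1) -> cabs (compound k B I J) <= k`!%:R.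
Proof.
move=> B1; rewrite mxE; apply: cabs_det_le => i j; rewrite mxE /subentry.
case: (onth (enum (kset_of I)) i) => [a|]; last by rewrite cabs0.
by case: (onth (enum (kset_of J)) j) => [b|]; rewrite ?cabs0 ?B1.
Qed.

End Compound.

(* [sup] of an unbounded set is a junk value, so the set defining theta must be
   shown bounded: minors of a matrix with entries of modulus <= 1 are <= k!. *)
Lemma opnorm_compound_le_theta (R : realType) (n k : nat)
    (nu : 'cV[R[i]]_('C(n, k)) -> R) r (B : 'M[R[i]]_n) :
  is_vnorm nu -> absolute nu -> (0 < 'C(n, k))%N -> (0 < r)%N ->
  (forall b, lp r (col b B) = 1) -> opnorm nu (compound k B) <= theta (opnorm nu) (lp r).
Proof.
move=> nu_norm nu_abs m_gt0 r_gt0 B1; apply: ub_le_sup; last by exists B.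
have [K hK] := vnorm_mulmx_le nu_norm nu_abs.
exists (K * k`!%:R) => _ [B' /= B'1 <-]; apply: opnorm_le => // x x1.
rewrite -[leRHS]mulr1 -[X in _ <= _ * X]x1; apply: hK => [|I J]; first exact: ler0n.
apply: cabs_compound_le => a b; have := cabs_le_lp (col b B') a r_gt0.
by rewrite B'1 !mxE.
Qed.

Unset Implicit Arguments.

Theorem lemma2p12 (R : realType) (n k : nat) (mu : 'M[R[i]]_('C(n, k)) -> R)
    (p r : nat) :
  (0 < k)%N -> (k <= n)%N -> abs_opnorm mu -> (0 < p)%N -> (0 < r)%N ->
  @theta R n k mu (@lp R n p) <=
    powR (n%:R : R) (Num.max (k%:R / r%:R - k%:R / p%:R) 0) * @theta R n k mu (@lp R n r).
Proof.
move=> k_gt0 kn [nu [nu_norm nu_abs /funext ->]] p_gt0 r_gt0.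
have m_gt0 : (0 < 'C(n, k))%N by rewrite bin_gt0.
have n_gt0 : (0 < n)%N := leq_trans k_gt0 kn.
set s : R := n%:R `^ Num.max (r%:R^-1 - p%:R^-1) 0.
have s_ge0 : 0 <= s := powR_ge0 _ _.
have -> : (n%:R : R) `^ Num.max (k%:R / r%:R - k%:R / p%:R) 0 = s ^+ k.
  rewrite -(powR_mulrn k s_ge0) -powRrM maxr_pMl ?ler0n // mul0r.
  by rewrite mulrBl [_^-1 * k%:R]mulrC [p%:R^-1 * _]mulrC.
apply: ge_sup => [|_ [B /= B1 <-]].
  by exists (opnorm nu (compound k 1%:M)), 1%:M => // b; apply: lp_col_id.
have cols_neq0 b : col b B != 0.
  by apply/eqP => B0; move: (B1 b); rewrite B0 lp0 // => /eqP; rewrite eq_sym oner_eq0.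
have [B' B'1 ->] := lp_normalize_cols r_gt0 cols_neq0.
rewrite compound_mul_diag.
apply: le_trans (opnorm_mul_diag nu_norm nu_abs _ (G := s ^+ k) m_gt0 _) _.
- move=> J; rewrite mxE -[X in _ <= s ^+ X](card_kset_of J); apply: cabs_prod_le => b.
  by rewrite mxE cabs_real ?lp_ge0 // (lp_le_max n_gt0 p_gt0 r_gt0 (B1 b)).
- by rewrite ler_wpM2l ?exprn_ge0 ?opnorm_compound_le_theta.
Qed.
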